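(* Let $G=(V,E)$ be a simple graph and $v\in V$ with degree $d(v)$. Then $$P(\mathcal{H}_{\bullet G},\lambda)=(\lambda-1)P(\mathcal{H}_{\bullet(G-\{v\})},\lambda)+(\lambda-1)^{d(v)}P(\mathcal{H}_{\bullet(G-N[v])},\lambda),$$ where $N[v]$ is the closed neighbourhood of $v$ and $G-S$ denotes the graph obtained by deleting the vertex set $S$.
   Context: A hypergraph $\mathcal{H}=(\mathcal{V},\mathcal{E})$ consists of a finite vertex set $\mathcal{V}$ and a set $\mathcal{E}$ of subsets of $\mathcal{V}$, each of size at least $1$, called edges. For a positive integer $\lambda$, a weak proper $\lambda$-colouring of $\mathcal{H}$ is a map $\phi:\mathcal{V}\to\{1,\dots,\lambda\}$ such that $|\{\phi(v):v\in e\}|>1$ for every $e\in\mathcal{E}$. $P(\mathcal{H},\lambda)$ denotes the number of weak proper $\lambda$-colourings; it is a polynomial in $\lambda$. For a simple graph $G=(V,E)$ (possibly with empty vertex set), $\mathcal{H}_{\bullet G}$ is the hypergraph with vertex set $V\cup\{w\}$, $w\notin V$ a new vertex, and edge set $\{\{u,v,w\}:uv\in E\}$. *)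

From HB Require Import structures.
From mathcomp Require Import all_boot.
Set Implicit Arguments. Unset Strict Implicit. Unset Printing Implicit Defensive.

(* A hypergraph on an ambient finite type T: vertex set Vs : {set T},
   edge set Es : {set {set T}} (each edge a nonempty subset of Vs). *)

(* A colouring of the vertex set Vs with colours {1..lam} (here 'I_lam)
   is a function on the subtype of vertices. *)
Definition weak_proper (T : finType) (Vs : {set T}) (Es : {set {set T}})
  (lam : nat) (phi : {ffun {x : T | x \in Vs} -> 'I_lam}) : bool :=
  [forall e in Es,
     [exists x : {x : T | x \in Vs}, exists y : {x : T | x \in Vs},
        [&& val x \in e, val y \in e & phi x != phi y]]].

Definition chrom_hyp (T : finType) (Vs : {set T}) (Es : {set {set T}})
  (lam : nat) : nat :=
  #|[set phi : {ffun {x : T | x \in Vs} -> 'I_lam} | weak_proper Es phi]|.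

(* A simple graph G = (V, E) is given by a vertex set V : {set T} and a
   symmetric irreflexive relation adj; its edges are the pairs uv with
   u, v in V and adj u v. *)

(* H_{bullet G}: vertices V + {w}, with w = None; edges {u,v,w} for uv in E. *)
Definition Hb_vertices (T : finType) (V : {set T}) : {set option T} :=
  None |: (Some @: V).

Definition Hb_edges (T : finType) (V : {set T}) (adj : rel T)
  : {set {set option T}} :=
  [set [set Some x.1; Some x.2; None] | x in setX V V & adj x.1 x.2].

Definition P_Hb (T : finType) (V : {set T}) (adj : rel T) (lam : nat) : nat :=
  chrom_hyp (Hb_vertices V) (Hb_edges V adj) lam.

Definition nbhd (T : finType) (V : {set T}) (adj : rel T) (v : T) : {set T} :=
  [set u in V | adj v u].
Definition degree (T : finType) (V : {set T}) (adj : rel T) (v : T) : nat :=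
  #|nbhd V adj v|.
Definition closed_nbhd (T : finType) (V : {set T}) (adj : rel T) (v : T)
  : {set T} := v |: nbhd V adj v.

From HB Require Import structures.
From mathcomp Require Import all_boot.

(* A weak proper colouring of H_{bullet G} is a colouring of V + {w} in which
   no edge uv of G has both ends coloured like the hub w.  Split on whether v
   gets the hub's colour.  If not, v imposes no constraint: forgetting its
   colour is a (lam - 1)-to-one map onto the colourings of H_{bullet (G - v)}.
   If so, every neighbour of v must avoid the hub's colour and then imposes
   no further constraint: forgetting the colours on N[v] is a
   (lam - 1)^d(v)-to-one map onto the colourings of H_{bullet (G - N[v])}. *)

Lemma card_uniform_fibers (X Y : finType) (A : {set X}) (B : {set Y})
    (r : X -> Y) (k : nat) :
  (forall f, f \in A -> r f \in B) ->
  (forall g, g \in B -> #|[set f in A | r f == g]| = k) ->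
  #|A| = #|B| * k.
Proof.
move=> rAB fiberB; rewrite -sum1_card (partition_big r (mem B)) //=.
rewrite -sum_nat_const; apply: eq_bigr => g Bg.
by rewrite -(fiberB g Bg) -sum1_card; apply: eq_bigl => f; rewrite inE.
Qed.

Section HubColourings.

Set Implicit Arguments.
Variables (T : finType) (adj : rel T) (n : nat).

Local Notation colouring := {ffun option T -> 'I_n.+1}.

(* Colourings of the ambient type [option T] that are [ord0] outside the
   vertex set stand for colourings of [Hb_vertices V]; [None] is the hub. *)
Definition supported (V : {set T}) (f : colouring) : bool :=
  [forall a, (a \notin V) ==> (f (Some a) == ord0)].

Definition hub_avoiding (V : {set T}) (f : colouring) : bool :=
  [forall a in V, forall b in V,
     adj a b ==> (f (Some a) != f None) || (f (Some b) != f None)].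

Definition hub_colourings (V : {set T}) : {set colouring} :=
  [set f | supported V f && hub_avoiding V f].

Lemma supportedP (V : {set T}) (f : colouring) :
  reflect (forall a, a \notin V -> f (Some a) = ord0) (supported V f).
Proof.
apply: (iffP forallP) => fV a; last by apply/implyP => aV; apply/eqP/fV.
by move=> aV; apply/eqP/(implyP (fV a)).
Qed.

Lemma hub_avoidingP (V : {set T}) (f : colouring) :
  reflect (forall a b, a \in V -> b \in V -> adj a b ->
             (f (Some a) != f None) || (f (Some b) != f None))
          (hub_avoiding V f).
Proof.
apply: (iffP forall_inP) => fV a.
  by move=> b aV bV ab; move: (fV a aV) => /forall_inP/(_ b bV)/implyP; apply.
by move=> aV; apply/forall_inP => b bV; apply/implyP; apply: fV.
Qed.

Lemma triangle_not_monochromatic (f : colouring) a b :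
  [exists x, exists y, [&& x \in [set Some a; Some b; None],
                           y \in [set Some a; Some b; None] & f x != f y]]
  = (f (Some a) != f None) || (f (Some b) != f None).
Proof.
apply/existsP/idP.
  case=> x /existsP [y /and3P [xe ye fxy]]; rewrite -negb_and.
  apply/andP => -[/eqP fa /eqP fb]; move: fxy.
  rewrite !inE -!orbA in xe ye.
  by case/or3P: xe => /eqP->; case/or3P: ye => /eqP->; rewrite ?fa ?fb eqxx.
case/orP=> fab; [exists (Some a) | exists (Some b)];
  by apply/existsP; exists None; rewrite !inE eqxx /= ?orbT fab.
Qed.

Lemma Hb_edges_not_monochromatic (V : {set T}) (f : colouring) :
  [forall e in Hb_edges V adj,
     [exists x, exists y, [&& x \in e, y \in e & f x != f y]]]
  = hub_avoiding V f.
Proof.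
apply/forall_inP/hub_avoidingP.
  move=> fE a b aV bV ab; rewrite -triangle_not_monochromatic; apply: fE.
  by apply/imsetP; exists (a, b); rewrite // !inE aV bV ab.
move=> fV e /imsetP [[a b]]; rewrite !inE /= => /andP [/andP [aV bV] ab] ->.
by rewrite triangle_not_monochromatic fV.
Qed.

Local Notation vertex V := {x : option T | x \in Hb_vertices V}.

Definition extend_colouring (V : {set T}) (phi : {ffun vertex V -> 'I_n.+1}) :
  colouring :=
  [ffun x => if insub x is Some y then phi y else ord0].

Lemma extend_colouring_inj (V : {set T}) : injective (@extend_colouring V).
Proof.
move=> phi psi /ffunP phi_psi; apply/ffunP => y.
by have := phi_psi (val y); rewrite !ffunE valK.
Qed.

Lemma insub_Hb_vertex (V : {set T}) x (xV : x \in Hb_vertices V) :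
  insub x = Some (Sub x xV : vertex V).
Proof. by rewrite insubT; congr Some; apply: val_inj. Qed.

Lemma weak_proper_extend (V : {set T}) (phi : {ffun vertex V -> 'I_n.+1}) :
  weak_proper (Hb_edges V adj) phi = hub_avoiding V (extend_colouring phi).
Proof.
rewrite -Hb_edges_not_monochromatic; apply: eq_forallb => e.
case eE: (e \in Hb_edges V adj) => //=.
have eV x : x \in e -> x \in Hb_vertices V.
  move: eE => /imsetP [[a b]]; rewrite !inE /= => /andP [/andP [aV bV] _] ->.
  by rewrite !inE -!orbA => /or3P[] /eqP->; rewrite ?eqxx ?imset_f ?orbT.
apply/existsP/existsP.
  case=> x /existsP [y /and3P [xe ye phixy]].
  by exists (val x); apply/existsP; exists (val y); rewrite xe ye !ffunE !valK.
case=> x /existsP [y /and3P [xe ye fxy]].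
exists (Sub x (eV x xe)); apply/existsP; exists (Sub y (eV y ye)).
by move: fxy; rewrite !SubK xe ye /= !ffunE
  (insub_Hb_vertex (eV x xe)) (insub_Hb_vertex (eV y ye)).
Qed.

Lemma P_Hb_hub_colourings (V : {set T}) : P_Hb V adj n.+1 = #|hub_colourings V|.
Proof.
rewrite /P_Hb /chrom_hyp -(card_imset _ (@extend_colouring_inj V)).
apply: eq_card => f; apply/imsetP/idP.
  case=> phi; rewrite inE => phi_proper ->.
  rewrite inE -weak_proper_extend phi_proper andbT.
  apply/supportedP => a aV; rewrite ffunE insubN //= !inE /=.
  by apply: contra aV => /imsetP [b bV [->]].
rewrite inE => /andP [/supportedP fV f_avoiding].
have fE : extend_colouring [ffun y : vertex V => f (val y)] = f.
  apply/ffunP => x; rewrite ffunE.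
  case: insubP => [y _ <-|]; first by rewrite ffunE.
  case: x => [a|]; last by rewrite !inE eqxx.
  by rewrite !inE /= => aV; rewrite fV //; apply: contra aV => /(imset_f Some).
by exists [ffun y => f (val y)]; rewrite // inE weak_proper_extend fE.
Qed.

Definition recolour (f : colouring) x0 c : colouring :=
  [ffun x => if x == x0 then c else f x].

Lemma card_hub_colourings_off_hub (V : {set T}) (v : T) : v \in V ->
  #|[set f in hub_colourings V | f (Some v) != f None]|
  = #|hub_colourings (V :\ v)| * n.
Proof.
move=> vV.
apply: (@card_uniform_fibers _ _ _ _ (fun f => recolour f (Some v) ord0)).
  move=> f; rewrite !inE => /andP [/andP [/supportedP fV /hub_avoidingP f_av] _].
  apply/andP; split.
    apply/supportedP => a; rewrite !inE negb_and negbK ffunE.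
    by case/orP=> [/eqP-> | aV]; [rewrite eqxx | case: eqP => // _; apply: fV].
  apply/hub_avoidingP => a b; rewrite !inE => /andP [av aV] /andP [bv bV] ab.
  by rewrite !ffunE !(inj_eq Some_inj) (negbTE av) (negbTE bv) f_av.
move=> g; rewrite inE => /andP [/supportedP gV /hub_avoidingP g_av].
have gv : g (Some v) = ord0 by apply: gV; rewrite !inE eqxx.
transitivity #|[set~ g None]|; last by rewrite cardsC1 card_ord.
rewrite -(card_imset _ (f := recolour g (Some v))); last first.
  by move=> c1 c2 /ffunP /(_ (Some v)); rewrite !ffunE eqxx.
apply: eq_card => f; apply/idP/imsetP.
  rewrite !inE => /andP [/andP [_ fv] /eqP fg].
  have fN : f None = g None by rewrite -fg ffunE.
  exists (f (Some v)); first by rewrite !inE -fN.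
  by apply/ffunP => x; rewrite -fg !ffunE; case: eqP => [->|].
case=> c; rewrite !inE => c_off ->.
have gcE x : x != Some v -> recolour g (Some v) c x = g x.
  by move=> xv; rewrite ffunE (negbTE xv).
have gcN : recolour g (Some v) c None = g None by rewrite gcE.
have gcv : recolour g (Some v) c (Some v) = c by rewrite ffunE eqxx.
rewrite gcN gcv c_off andbT.
apply/andP; split; first (apply/andP; split).
- apply/supportedP => a aV; rewrite gcE; last by apply: contraNneq aV => -[->].
  by apply: gV; rewrite !inE negb_and aV orbT.
- apply/hub_avoidingP => a b aV bV ab; rewrite gcN.
  have [->|av] := eqVneq a v; first by rewrite gcv c_off.
  have [->|bv] := eqVneq b v; first by rewrite gcv c_off orbT.
  by rewrite !gcE ?(inj_eq Some_inj) // g_av // !inE ?av ?bv.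
- by apply/eqP/ffunP => x; rewrite !ffunE; case: eqP => [->|].
Qed.

Section OnHub.

Variables (V : {set T}) (v : T).
Hypotheses (adj_sym : symmetric adj) (adj_irr : irreflexive adj) (vV : v \in V).

Local Notation N := (nbhd V adj v).
Local Notation Nc := (closed_nbhd V adj v).

Let v_notin_N : v \notin N.
Proof. by rewrite inE adj_irr andbF. Qed.

Definition forget_closed_nbhd (f : colouring) : colouring :=
  [ffun x => if x is Some u then (if u \in Nc then ord0 else f x) else f x].

(* The inverse of [forget_closed_nbhd] on a fiber: [v] gets the hub's colour
   and the neighbours of [v] are coloured by [h]. *)
Definition refill (g : colouring) (h : {ffun T -> 'I_n.+1}) : colouring :=
  [ffun x => if x is Some u then
               (if u == v then g None else if u \in N then h u else g x)
             else g None].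

Lemma refill_inj (g : colouring) :
  {in pffun_on ord0 N [set~ g None] &, injective (refill g)}.
Proof.
move=> h1 h2 /familyP h1N /familyP h2N /ffunP h12; apply/ffunP => u.
move: (h12 (Some u)) (h1N u) (h2N u); rewrite !ffunE.
have [uN|uN] := boolP (u \in N); last by rewrite !inE => _ /eqP-> /eqP->.
have [uv|_] := eqVneq u v; last by move=> ->.
by move: uN; rewrite uv (negbTE v_notin_N).
Qed.

Lemma card_hub_colourings_on_hub :
  #|[set f in hub_colourings V | f (Some v) == f None]|
  = #|hub_colourings (V :\: Nc)| * n ^ degree V adj v.
Proof.
have inNc u : (u \in Nc) = (u == v) || (u \in N) by rewrite !inE.
apply: (@card_uniform_fibers _ _ _ _ (forget_closed_nbhd)).
  move=> f; rewrite !inE => /andP [/andP [/supportedP fV /hub_avoidingP f_av] _].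
  apply/andP; split.
    apply/supportedP => a; rewrite in_setD negb_and negbK ffunE.
    by case/orP=> [->|aV] //; case: ifP => // _; apply: fV.
  apply/hub_avoidingP => a b; rewrite !in_setD => /andP [aN aV] /andP [bN bV] ab.
  by rewrite !ffunE (negbTE aN) (negbTE bN) f_av.
move=> g; rewrite inE => /andP [/supportedP gV /hub_avoidingP g_av].
have -> : n ^ degree V adj v = #|pffun_on ord0 N [set~ g None]|.
  by rewrite card_pffun_on cardsC1 card_ord.
rewrite -(card_in_imset (refill_inj (g := g))).
apply: eq_card => f; apply/idP/imsetP.
  rewrite !inE => /andP [/andP [/andP [_ /hub_avoidingP f_av] /eqP fv] /eqP fg].
  have fN : f None = g None by rewrite -fg ffunE.
  exists [ffun u => if u \in N then f (Some u) else ord0].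
    apply/familyP => u; rewrite ffunE; case: ifP => // /[dup] uN.
    rewrite inE => /andP [uV vu]; move: (f_av v u vV uV vu).
    by rewrite fv eqxx fN !inE.
  apply/ffunP => -[u|]; rewrite !ffunE //.
  have [->|uv] := eqVneq u v; first by rewrite fv.
  have [uN|uN] := boolP (u \in N); first by [].
  by rewrite -fg ffunE inNc (negbTE uN) (negbTE uv).
case=> h /familyP hN ->.
have refillN : refill g h None = g None by rewrite ffunE.
have refillNbr u : u \in N -> refill g h (Some u) != g None.
  move=> uN; rewrite ffunE; have [uv|_] := eqVneq u v.
    by move: uN; rewrite uv (negbTE v_notin_N).
  by move: (hN u); rewrite uN !inE.
rewrite !inE [refill g h (Some v)]ffunE eqxx refillN eqxx andbT.
apply/andP; split; first (apply/andP; split).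
- apply/supportedP => a aV.
  have av : a != v by apply: contraNneq aV => ->.
  have aN : a \notin N by apply: contra aV; rewrite inE => /andP [].
  by rewrite ffunE (negbTE av) (negbTE aN) gV // in_setD (negbTE aV) andbF.
- apply/hub_avoidingP => a b aV bV ab; rewrite refillN.
  have [aN|aN] := boolP (a \in N); first by rewrite (refillNbr _ aN).
  have [bN|bN] := boolP (b \in N); first by rewrite (refillNbr _ bN) orbT.
  have av : a != v by apply: contraNneq bN => av; rewrite inE bV -av ab.
  have bv : b != v by apply: contraNneq aN => bv; rewrite inE aV -bv adj_sym ab.
  rewrite !ffunE (negbTE av) (negbTE bv) (negbTE aN) (negbTE bN) g_av //.
    by rewrite in_setD inNc negb_or av aN.
  by rewrite in_setD inNc negb_or bv bN.
- apply/eqP/ffunP => -[u|]; rewrite !ffunE //.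
  case: ifP => [uNc|]; first by rewrite gV // inE uNc.
  by rewrite inNc; case: eqP => //= _ ->.
Qed.

End OnHub.

End HubColourings.

Theorem proposition3 (T : finType) (V : {set T}) (adj : rel T)
  (adj_sym : symmetric adj) (adj_irr : irreflexive adj)
  (v : T) (hv : v \in V) (lam : nat) (hlam : 0 < lam) :
  P_Hb V adj lam =
    (lam - 1) * P_Hb (V :\ v) adj lam
    + (lam - 1) ^ degree V adj v * P_Hb (V :\: closed_nbhd V adj v) adj lam.
Proof.
case: lam hlam => // n _; rewrite !P_Hb_hub_colourings subn1 /=.
set off_hub := [set f : {ffun option T -> 'I_n.+1} | f (Some v) != f None].
rewrite -(cardsID off_hub (hub_colourings adj n V)).
rewrite mulnC -(card_hub_colourings_off_hub adj n hv).
rewrite mulnC -(card_hub_colourings_on_hub n adj_sym adj_irr hv).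
by congr (_ + _); apply: eq_card => f; rewrite !inE ?negbK // andbC.
Qed.
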